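(* Let $k$ be a field, let $d_1,\ldots,d_n$ be positive integers, let $m\ge 0$ be an integer, and let $f,h \in k[x_1, \dots ,x_n]$ be such that $h^mf \in (x_1^{d_1}, \ldots, x_n^{d_n})$. Then for every $j\in\{1,\ldots,n\}$, \[h^{m+1}f'_{x_j} \in (x_1^{\bar{d_1}}, \ldots , x_n^{\bar{d_n}}),\] where $\bar{d_j}=d_j-1$ and $\bar{d_i}=d_i$ for all $i \ne j$.
   Context: $f'_{x_j}$ denotes the formal partial derivative of the polynomial $f$ with respect to $x_j$. *)

From HB Require Import structures.
From mathcomp Require Import all_boot all_order all_algebra.
From mathcomp Require Import mpoly.

Set Implicit Arguments.
Unset Strict Implicit.
Unset Printing Implicit Defensive.
Import GRing.Theory.
Local Open Scope ring_scope.

Definition in_ideal (R : comRingType) (n : nat)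
    (gens : 'I_n -> {mpoly R[n]}) (p : {mpoly R[n]}) : Prop :=
  exists c : 'I_n -> {mpoly R[n]}, p = \sum_(i < n) c i * gens i.

Definition pow_ideal (R : comRingType) (n : nat) (e : 'I_n -> nat)
    (p : {mpoly R[n]}) : Prop :=
  in_ideal (fun i : 'I_n => ('X_i : {mpoly R[n]}) ^+ e i) p.

Definition dbar (n : nat) (d : 'I_n -> nat) (j : 'I_n) : 'I_n -> nat :=
  fun i => if i == j then (d i).-1 else d i.

From HB Require Import structures.
From mathcomp Require Import all_boot all_order all_algebra.
From mathcomp Require Import mpoly.
From mathcomp Require Import ring.
Import GRing.Theory.
Local Open Scope ring_scope.

(* The ideal I = (x_1^{d_1}, ..., x_n^{d_n}) satisfies d/dx_j I ⊆ Ibar and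
   I ⊆ Ibar, so the identity
     h^{m+1} f' = h (h^m f)' - m h' (h^m f)
   puts h^{m+1} f' in Ibar as soon as h^m f lies in I. *)

Section Ideal.

Variables (R : comNzRingType) (n : nat) (gens : 'I_n -> {mpoly R[n]}).

Lemma in_ideal0 : in_ideal gens 0.
Proof. by exists (fun=> 0); rewrite big1 // => i _; rewrite mul0r. Qed.

Lemma in_idealD p q : in_ideal gens p -> in_ideal gens q -> in_ideal gens (p + q).
Proof.
move=> [c ->] [c' ->]; exists (fun i => c i + c' i).
by rewrite -big_split; apply: eq_bigr => i _; rewrite mulrDl.
Qed.

Lemma in_idealMl q p : in_ideal gens p -> in_ideal gens (q * p).
Proof.
move=> [c ->]; exists (fun i => q * c i).
by rewrite big_distrr; apply: eq_bigr => i _ /=; rewrite mulrA.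
Qed.

Lemma in_idealB p q : in_ideal gens p -> in_ideal gens q -> in_ideal gens (p - q).
Proof. by move=> Ip Iq; rewrite -mulN1r; apply/in_idealD/in_idealMl. Qed.

Lemma in_ideal_gen i : in_ideal gens (gens i).
Proof.
exists (fun l => (l == i)%:R); rewrite (bigD1 i) //= eqxx mul1r big1 ?addr0 //.
by move=> l /negPf ->; rewrite mul0r.
Qed.

Lemma in_ideal_sum (F : 'I_n -> {mpoly R[n]}) :
  (forall i, in_ideal gens (F i)) -> in_ideal gens (\sum_(i < n) F i).
Proof. by move=> IF; apply: big_ind => //; [exact: in_ideal0 | exact: in_idealD]. Qed.

End Ideal.

Section Derivative.

Variables (R : comNzRingType) (n : nat).
Implicit Types (p f h : {mpoly R[n]}).

Lemma mderivX1 (i j : 'I_n) : mderiv j ('X_i : {mpoly R[n]}) = (i == j)%:R.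
Proof.
rewrite mderivX mnm1E; case: eqP => [->|_]; last by rewrite scale0r.
have -> : (U_(j) - U_(j))%MM = 0%MM by apply/mnmP => l; rewrite !mnmE subnn.
by rewrite mpolyX0 scale1r.
Qed.

Lemma mderiv_exp (j : 'I_n) p e :
  mderiv j (p ^+ e) = e%:R * p ^+ e.-1 * mderiv j p.
Proof.
elim: e => [|[|e] IH]; first by rewrite expr0 -mpolyC1 mderivC !mul0r.
  by rewrite expr1 expr0 mulr1 mul1r.
by rewrite exprS mderivM IH !exprS /=; ring.
Qed.

Lemma mderivXn (i j : 'I_n) e :
  mderiv j (('X_i : {mpoly R[n]}) ^+ e) = ((i == j) * e)%:R * 'X_i ^+ e.-1.
Proof. by rewrite mderiv_exp mderivX1 natrM; ring. Qed.

(* Multiplying by h avoids the exponent m - 1 of (h^m)'. *)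
Lemma mderiv_exprM (j : 'I_n) (m : nat) h f :
  h ^+ m.+1 * mderiv j f
  = h * mderiv j (h ^+ m * f) - m%:R * mderiv j h * (h ^+ m * f).
Proof.
rewrite mderivM mderiv_exp; case: m => [|m] /=; first by rewrite !mul0r; ring.
by rewrite !exprS; ring.
Qed.

End Derivative.

Section PowIdeal.

Variables (R : comNzRingType) (n : nat).
Implicit Types (p : {mpoly R[n]}).

Lemma pow_ideal_le (e e' : 'I_n -> nat) p :
  (forall i, e' i <= e i)%N -> pow_ideal e p -> pow_ideal e' p.
Proof.
move=> le_e [c ->]; apply: in_ideal_sum => i.
rewrite -(subnK (le_e i)) exprD mulrA; apply/in_idealMl/in_ideal_gen.
Qed.

Lemma pow_ideal_dbar (d : 'I_n -> nat) (j : 'I_n) p :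
  pow_ideal d p -> pow_ideal (dbar d j) p.
Proof.
by apply: pow_ideal_le => i; rewrite /dbar; case: eqP => // _; apply: leq_pred.
Qed.

Lemma pow_ideal_mderiv (d : 'I_n -> nat) (j : 'I_n) p :
  pow_ideal d p -> pow_ideal (dbar d j) (mderiv j p).
Proof.
move=> [c ->]; rewrite raddf_sum; apply: in_ideal_sum => i /=.
rewrite mderivM mderivXn; apply: in_idealD.
  by apply/in_idealMl/pow_ideal_dbar/in_ideal_gen.
have [->|ne_ij] := eqVneq i j; last by rewrite /= mul0n mul0r mulr0; apply: in_ideal0.
rewrite mulrA; apply: in_idealMl.
have := @in_ideal_gen _ _ (fun i => ('X_i : {mpoly R[n]}) ^+ dbar d j i) j.
by rewrite {2}/dbar eqxx.
Qed.

End PowIdeal.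

Theorem lemma2p1 (k : fieldType) (n : nat) (d : 'I_n -> nat)
    (hd : forall i, (0 < d i)%N) (m : nat) (f h : {mpoly k[n]}) :
  pow_ideal d (h ^+ m * f) ->
  forall j : 'I_n, pow_ideal (dbar d j) (h ^+ m.+1 * mderiv j f).
Proof.
move=> Ihf j; rewrite mderiv_exprM.
apply: in_idealB; apply: in_idealMl.
  exact: pow_ideal_mderiv.
exact: pow_ideal_dbar.
Qed.
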